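(* Let $(S,d)$ be a metric space and let $P\subset S$ be a subset with at least two points, equipped with the restriction of $d$. Then $\mathcal{E}^S_P$ maps $\operatorname{ext}_*(B^P_{\mathrm{BL}})$ into $\operatorname{ext}_*(B^S_{\mathrm{BL}})$.
   Context: For a metric space $T$, $\mathrm{BL}(T)$ is the space of bounded real-valued Lipschitz functions on $T$, $|f|_L=\sup_{x\neq y}|f(x)-f(y)|/d(x,y)$, $\|f\|_{\mathrm{BL}}=\|f\|_\infty+|f|_L$, $B^T_{\mathrm{BL}}=\{f\in\mathrm{BL}(T):\|f\|_{\mathrm{BL}}\le1\}$, and $\operatorname{ext}_*(B^T_{\mathrm{BL}})=\operatorname{ext}(B^T_{\mathrm{BL}})\setminus\{f\in B^T_{\mathrm{BL}}:|f|=\mathbf{1}\}$ (non-trivial extreme points). For $f\in\mathrm{BL}(P)$: $\mathcal{E}^{S,0}_P f(x)=\sup_{p\in P}[f(p)-|f|_L d(p,x)]$ for $x\in S$, and $\mathcal{E}^S_P f=\max(\mathcal{E}^{S,0}_P f,-\|f\|_\infty)$. *)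

From mathcomp Require Import all_boot all_order all_algebra.
From mathcomp Require Import all_classical all_reals.
Set Implicit Arguments. Unset Strict Implicit. Unset Printing Implicit Defensive.
Import Order.TTheory GRing.Theory Num.Theory.
Local Open Scope classical_set_scope.
Local Open Scope ring_scope.

Section BL.
Variable R : realType.

Definition is_metric (T : Type) (d : T -> T -> R) : Prop :=
  (forall x y, 0 <= d x y) /\
  (forall x y, d x y = 0 <-> x = y) /\
  (forall x y, d x y = d y x) /\
  (forall x y z, d x z <= d x y + d y z).

Definition is_BL (T : Type) (d : T -> T -> R) (f : T -> R) : Prop :=
  (exists M : R, forall x, `|f x| <= M) /\
  (exists L : R, forall x y, `|f x - f y| <= L * d x y).

Definition lipc (T : Type) (d : T -> T -> R) (f : T -> R) : R :=
  sup [set r | exists x y, x <> y /\ r = `|f x - f y| / d x y].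

Definition supnorm (T : Type) (f : T -> R) : R :=
  sup [set r | exists x, r = `|f x|].

Definition BLnorm (T : Type) (d : T -> T -> R) (f : T -> R) : R :=
  supnorm f + lipc d f.

Definition BLball (T : Type) (d : T -> T -> R) (f : T -> R) : Prop :=
  is_BL d f /\ BLnorm d f <= 1.

Definition is_ext_BL (T : Type) (d : T -> T -> R) (f : T -> R) : Prop :=
  BLball d f /\
  forall (g h : T -> R) (t : R), BLball d g -> BLball d h -> 0 < t < 1 ->
    (forall x, f x = t * g x + (1 - t) * h x) ->
    (forall x, g x = f x) /\ (forall x, h x = f x).

Definition is_ext_star_BL (T : Type) (d : T -> T -> R) (f : T -> R) : Prop :=
  is_ext_BL d f /\ ~ (forall x, `|f x| = 1).

Definition restr_metric (S : Type) (d : S -> S -> R) (P : set S)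
  : {x : S | P x} -> {x : S | P x} -> R :=
  fun p q => d (proj1_sig p) (proj1_sig q).
Arguments restr_metric {S} d P _ _.

Definition ext0 (S : Type) (d : S -> S -> R) (P : set S)
  (f : {x : S | P x} -> R) (x : S) : R :=
  sup [set r | exists p : {x : S | P x},
                 r = f p - lipc (restr_metric d P) f * d (proj1_sig p) x].
Arguments ext0 {S} d P f x.

Definition ext_op (S : Type) (d : S -> S -> R) (P : set S)
  (f : {x : S | P x} -> R) (x : S) : R :=
  Num.max (ext0 d P f x) (- supnorm f).

End BL.
Arguments restr_metric {R S} d P _ _.
Arguments ext0 {R S} d P f x.
Arguments ext_op {R S} d P f x.

From mathcomp Require Import all_boot all_order all_algebra.
From mathcomp Require Import all_classical all_reals.
From mathcomp Require Import lra.
Set Implicit Arguments. Unset Strict Implicit. Unset Printing Implicit Defensive.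
Import Order.TTheory GRing.Theory Num.Theory.
Local Open Scope classical_set_scope.
Local Open Scope ring_scope.

(* An extreme point f of the unit ball has norm exactly 1, otherwise f ± c
   would both lie in the ball.  Its extension F := E f is the pointwise least
   function G with G >= -||f||_oo, |G|_L <= |f|_L and G = f on P.  As
   restriction to P does not increase ||.||_oo nor |.|_L and ||f||_BL = 1,
   every G in the unit ball of BL(S) extending f satisfies these constraints
   (with equality), so F <= G.  Now
   if F = t G + (1 - t) H with G, H in the ball, the restrictions of G and H
   express f as a convex combination, hence extend f; then F <= G and F <= H
   force G = H = F.  Finally F = f on P, so |F| = 1 cannot hold. *)

Section Metric.
Variables (R : realType) (T : Type) (d : T -> T -> R).
Hypothesis hd : is_metric d.

Lemma metric_ge0 x y : 0 <= d x y. Proof. by case: hd. Qed.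

Lemma metric_eq0 x y : d x y = 0 <-> x = y. Proof. by case: hd => _ []. Qed.

Lemma metric_xx x : d x x = 0. Proof. exact/metric_eq0. Qed.

Lemma metric_sym x y : d x y = d y x. Proof. by case: hd => _ [_ []]. Qed.

Lemma metric_triangle x y z : d x z <= d x y + d y z.
Proof. by case: hd => _ [_ [_ h]]. Qed.

Lemma metric_gt0 x y : x <> y -> 0 < d x y.
Proof.
by move=> xy; rewrite lt0r metric_ge0 andbT; apply/eqP => /metric_eq0.
Qed.

Lemma restr_metric_is_metric (P : set T) : is_metric (restr_metric d P).
Proof.
split; first by move=> ??; exact: metric_ge0.
split; last by split=> *; [exact: metric_sym | exact: metric_triangle].
move=> [x Px] [y Py]; rewrite /restr_metric /=.
split; last by case=> ->; exact: metric_xx.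
by move/metric_eq0 => exy; subst y; congr exist; exact: Prop_irrelevance.
Qed.

End Metric.

Section BLnorm.
Variables (R : realType) (T : Type) (d : T -> T -> R).
Hypothesis hd : is_metric d.

Lemma BL_lipschitz (f : T -> R) x y : is_BL d f ->
  `|f x - f y| <= lipc d f * d x y.
Proof.
move=> [_ [L HL]].
have [xy|xy] := pselect (x = y); first by rewrite xy subrr normr0 metric_xx // mulr0.
have dxy := metric_gt0 hd xy.
rewrite -ler_pdivrMr //; apply: ub_le_sup; last by exists x, y.
exists L => _ [a [b [ab ->]]].
by rewrite ler_pdivrMr ?(metric_gt0 hd ab).
Qed.

Lemma lipc_le (f : T -> R) K : (exists x y : T, x <> y) ->
  (forall x y, `|f x - f y| <= K * d x y) -> lipc d f <= K.
Proof.
move=> [x0 [y0 xy0]] fK; apply: ge_sup; first by exists (`|f x0 - f y0| / d x0 y0), x0, y0.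
by move=> _ [a [b [ab ->]]]; rewrite ler_pdivrMr ?(metric_gt0 hd ab).
Qed.

Lemma lipc_ge0 (f : T -> R) (x y : T) : is_BL d f -> x <> y -> 0 <= lipc d f.
Proof.
move=> fBL xy; rewrite -(pmulr_lge0 (lipc d f) (metric_gt0 hd xy)).
exact: le_trans (normr_ge0 _) (BL_lipschitz x y fBL).
Qed.

Lemma lipc_addr (f : T -> R) c : lipc d (fun x => f x + c) = lipc d f.
Proof.
rewrite /lipc; congr sup; apply: funext => r; apply: propext.
by split=> -[a [b [ab ->]]]; exists a, b; rewrite opprD addrACA subrr addr0.
Qed.

Lemma supnorm_ge (f : T -> R) x : is_BL d f -> `|f x| <= supnorm f.
Proof.
move=> [[M HM] _]; apply: ub_le_sup; last by exists x.
by exists M => _ [y ->].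
Qed.

Lemma supnorm_le (f : T -> R) K (x0 : T) : (forall x, `|f x| <= K) -> supnorm f <= K.
Proof. by move=> fK; apply: ge_sup => [|_ [y ->]]; first by exists `|f x0|, x0. Qed.

Lemma BLball_addr (f : T -> R) c (x0 : T) : is_BL d f ->
  BLnorm d f + `|c| <= 1 -> BLball d (fun x => f x + c).
Proof.
move=> fBL le1; have [[M HM] [L HL]] := fBL.
split; first split.
- by exists (M + `|c|) => x; exact: le_trans (ler_normD _ _) (lerD (HM x) (lexx _)).
- by exists L => x y; rewrite opprD addrACA subrr addr0.
rewrite /BLnorm lipc_addr; apply: le_trans le1; rewrite addrAC lerD2r.
apply: (supnorm_le x0) => x.
exact: le_trans (ler_normD _ _) (lerD (supnorm_ge x fBL) (lexx _)).
Qed.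

Lemma ext_BL_norm1 (f : T -> R) (x0 : T) : is_ext_BL d f -> BLnorm d f = 1.
Proof.
move=> [[fBL fn] fext]; apply/eqP; rewrite eq_le fn /= leNgt; apply/negP => lt1.
pose c := (1 - BLnorm d f) / 2.
have c_gt0 : 0 < c by rewrite divr_gt0 // subr_gt0.
have inball c' : `|c'| = c -> BLball d (fun x => f x + c').
  by move=> c'c; apply: (BLball_addr x0 fBL); rewrite c'c /c; lra.
have c_norm : `|c| = c /\ `|- c| = c by rewrite normrN gtr0_norm.
have t01 : 0 < (2^-1 : R) < 1 by lra.
have fmid x : f x = 2^-1 * (f x + c) + (1 - 2^-1) * (f x + - c) by lra.
have [/(_ x0) + _] := fext _ _ _ (inball _ c_norm.1) (inball _ c_norm.2) t01 fmid.
lra.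
Qed.

End BLnorm.

Lemma convex_comb_ge_eq (R : realFieldType) (a b c t : R) : 0 < t < 1 ->
  c <= a -> c <= b -> c = t * a + (1 - t) * b -> a = c /\ b = c.
Proof. by move=> /andP[t0 t1] ca cb e; split; nra. Qed.

Lemma norm_max_subr_le (R : realDomainType) (a b c K : R) :
  a <= b + K -> b <= a + K -> `|Num.max a c - Num.max b c| <= K.
Proof. by move=> ab ba; rewrite ler_norml; case: (leP a c); case: (leP b c); lra. Qed.

Section Extension.
Variables (R : realType) (S : Type) (d : S -> S -> R) (P : set S).
Hypothesis hd : is_metric d.
Hypothesis hP : exists p q : S, P p /\ P q /\ p <> q.

Local Notation dP := (restr_metric d P).
Local Notation hdP := (restr_metric_is_metric hd P).

Lemma exists_neq_in_P : exists p q : {x | P x}, p <> q.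
Proof.
case: hP => p [q [Pp [Pq pq]]].
by exists (exist P p Pp), (exist P q Pq) => /(congr1 (@proj1_sig _ _)).
Qed.

Lemma exists_neq_in_S : exists p q : S, p <> q.
Proof. by case: hP => p [q [_ [_ pq]]]; exists p, q. Qed.

Lemma supnorm_restr_le (G : S -> R) : is_BL d G ->
  supnorm (fun p : {x | P x} => G (proj1_sig p)) <= supnorm G.
Proof.
have [p _] := exists_neq_in_P.
by move=> GBL; apply: (supnorm_le p) => q; exact: supnorm_ge _ GBL.
Qed.

Lemma lipc_restr_le (G : S -> R) : is_BL d G ->
  lipc dP (fun p => G (proj1_sig p)) <= lipc d G.
Proof.
by move=> GBL; apply: (lipc_le hdP exists_neq_in_P) => p q; exact: (BL_lipschitz hd).
Qed.

Lemma BLball_restr (G : S -> R) : BLball d G -> BLball dP (fun p => G (proj1_sig p)).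
Proof.
move=> [GBL Gn]; have [[M HM] [K HK]] := GBL.
split; first by split; [exists M => p; exact: HM | exists K => p q; exact: HK].
exact: le_trans (lerD (supnorm_restr_le GBL) (lipc_restr_le GBL)) Gn.
Qed.

Variable f : {x | P x} -> R.
Hypothesis fBL : is_BL dP f.

Local Notation L := (lipc dP f).
Local Notation m := (supnorm f).
Local Notation E0 := (ext0 d P f).
Local Notation F := (ext_op d P f).

Lemma lipc_f_ge0 : 0 <= L.
Proof. by have [p [q pq]] := exists_neq_in_P; exact: (lipc_ge0 hdP fBL pq). Qed.

Lemma supnorm_f_ge0 : 0 <= m.
Proof.
by have [p _] := exists_neq_in_P; exact: le_trans (normr_ge0 _) (supnorm_ge p fBL).
Qed.

Lemma f_lipschitz p q : `|f p - f q| <= L * d (proj1_sig p) (proj1_sig q).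
Proof. exact: (BL_lipschitz hdP). Qed.

Lemma f_bounded p : - m <= f p <= m.
Proof. by rewrite -ler_norml; exact: supnorm_ge _ fBL. Qed.

Lemma ext0_term_le_supnorm x p : f p - L * d (proj1_sig p) x <= m.
Proof.
have /andP[_ fp] := f_bounded p.
have := mulr_ge0 lipc_f_ge0 (metric_ge0 hd (proj1_sig p) x); lra.
Qed.

Lemma ext0_ge x p : f p - L * d (proj1_sig p) x <= E0 x.
Proof.
apply: ub_le_sup; last by exists p.
by exists m => _ [q ->]; exact: ext0_term_le_supnorm.
Qed.

Lemma ext0_le x K : (forall p, f p - L * d (proj1_sig p) x <= K) -> E0 x <= K.
Proof.
have [p _] := exists_neq_in_P.
by move=> fK; apply: ge_sup => [|_ [q ->]]; first by exists (f p - L * d (proj1_sig p) x), p.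
Qed.

Lemma ext0_le_supnorm x : E0 x <= m.
Proof. exact/ext0_le/ext0_term_le_supnorm. Qed.

Lemma ext0_lipschitz x y : E0 x <= E0 y + L * d x y.
Proof.
apply: ext0_le => q; have := ext0_ge y q.
have := ler_wpM2l lipc_f_ge0 (metric_triangle hd (proj1_sig q) x y); lra.
Qed.

Lemma ext0_restr p : E0 (proj1_sig p) = f p.
Proof.
apply/eqP; rewrite eq_le; apply/andP; split.
  by apply: ext0_le => q; have := f_lipschitz q p; rewrite ler_norml; lra.
by have := ext0_ge (proj1_sig p) p; rewrite metric_xx // mulr0 subr0.
Qed.

Lemma ext_op_restr p : F (proj1_sig p) = f p.
Proof. by rewrite /ext_op ext0_restr; apply/max_idPl; case/andP: (f_bounded p). Qed.

Lemma ext_op_bounded x : `|F x| <= m.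
Proof.
rewrite /ext_op ler_norml le_max lexx orbT ge_max ext0_le_supnorm /=.
by have := supnorm_f_ge0; lra.
Qed.

Lemma ext_op_lipschitz x y : `|F x - F y| <= L * d x y.
Proof.
apply: norm_max_subr_le; first exact: ext0_lipschitz.
by rewrite (metric_sym hd x y); exact: ext0_lipschitz.
Qed.

Lemma ext_op_BLball : BLnorm dP f <= 1 -> BLball d F.
Proof.
move=> fn; have [p _] := exists_neq_in_S.
split; first by split; [exists m; exact: ext_op_bounded | exists L; exact: ext_op_lipschitz].
apply: le_trans fn; apply: lerD; first exact: (supnorm_le p ext_op_bounded).
exact: (lipc_le hd exists_neq_in_S ext_op_lipschitz).
Qed.

Lemma ext_op_minimal (G : S -> R) : (forall x, - m <= G x) ->
  (forall x y, G y - G x <= L * d y x) -> (forall p, G (proj1_sig p) = f p) ->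
  forall x, F x <= G x.
Proof.
move=> Gm GL Gf x; rewrite /ext_op ge_max Gm andbT.
by apply: ext0_le => q; rewrite -Gf; have := GL x (proj1_sig q); lra.
Qed.

Lemma ext_op_le_BLball_extension (G : S -> R) : BLnorm dP f = 1 -> BLball d G ->
  (forall p, G (proj1_sig p) = f p) -> forall x, F x <= G x.
Proof.
move=> fn1 GB Gf; have [GBL Gn] := GB.
have restrG : (fun p => G (proj1_sig p)) = f by apply: funext.
have := supnorm_restr_le GBL; have := lipc_restr_le GBL; rewrite restrG.
move: Gn fn1; rewrite /BLnorm => Gn fn1 lG sG.
have [mG LG] : supnorm G = m /\ lipc d G = L by split; lra.
apply: ext_op_minimal => // [x|x y].
  by have := supnorm_ge x GBL; rewrite mG ler_norml => /andP[].
by have := BL_lipschitz hd y x GBL; rewrite LG ler_norml => /andP[].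
Qed.

End Extension.

Theorem theorem4p8 (R : realType) (S : Type) (d : S -> S -> R)
  (hd : is_metric d) (P : set S)
  (hP : exists p q : S, P p /\ P q /\ p <> q)
  (f : {x : S | P x} -> R) :
  is_ext_star_BL (restr_metric d P) f ->
  is_ext_star_BL d (ext_op d P f).
Proof.
move=> [fext not_unimodular]; have [[fBL fn] fext'] := fext.
have [p0 _] := exists_neq_in_P hP.
have fn1 := ext_BL_norm1 p0 fext.
split; last by move=> Fu; apply: not_unimodular => p; rewrite -(ext_op_restr hd hP fBL).
split; first exact: ext_op_BLball.
move=> G H t GB HB t01 FGH.
have fGH p : f p = t * G (proj1_sig p) + (1 - t) * H (proj1_sig p).
  by rewrite -(ext_op_restr hd hP fBL) FGH.
have [Gf Hf] := fext' _ _ t (BLball_restr hd hP GB) (BLball_restr hd hP HB) t01 fGH.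
have FG := ext_op_le_BLball_extension hd hP fn1 GB Gf.
have FH := ext_op_le_BLball_extension hd hP fn1 HB Hf.
by split=> x; have [] := convex_comb_ge_eq t01 (FG x) (FH x) (FGH x).
Qed.
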